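(* Let $\lambda\in(0,\infty)^E$ satisfy the triangle inequalities at every vertex: whenever $e,f,g$ are the three edges at a vertex, $\lambda(e)\le\lambda(f)+\lambda(g)$, $\lambda(f)\le\lambda(e)+\lambda(g)$ and $\lambda(g)\le\lambda(e)+\lambda(f)$. Let $\mu=\min_{e\in E}\lambda(e)$. Then $\rho<\frac{8V}{\mu}$.
   Context: $\Gamma$ is a finite trivalent graph with edge set $E$ and $V$ vertices. For $\lambda\in(0,\infty)^E$ define $$\rho=2\sum_{v}\Big(\frac{\lambda(e_v)}{\lambda(f_v)\lambda(g_v)}+\frac{\lambda(f_v)}{\lambda(e_v)\lambda(g_v)}+\frac{\lambda(g_v)}{\lambda(e_v)\lambda(f_v)}\Big),$$ where the sum is over the vertices $v$ and $e_v,f_v,g_v$ are the three edges at $v$. For an ideal triangulation dual graph, $\rho$ equals twice the sum of all simplicial coordinates, i.e. the sum of the $n$ puncture sums $\rho_i$. *)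

From HB Require Import structures.
From mathcomp Require Import all_boot all_order all_algebra.
Set Implicit Arguments. Unset Strict Implicit. Unset Printing Implicit Defensive.
Import Order.TTheory GRing.Theory Num.Theory.
Local Open Scope ring_scope.

(* A finite trivalent graph (loops and multiple edges allowed), given by
   vertex type Vt, edge type Et and, for each vertex v, its three edge-ends
   inc v 0, inc v 1, inc v 2.  Every edge has exactly two ends (a loop at v
   occupies two of the three slots of v). *)
Definition trivalent (Vt Et : finType) (inc : Vt -> 'I_3 -> Et) : Prop :=
  forall e : Et, #|[set p : Vt * 'I_3 | inc p.1 p.2 == e]| = 2%N.

Definition i0 : 'I_3 := @Ordinal 3 0 isT.
Definition i1 : 'I_3 := @Ordinal 3 1 isT.
Definition i2 : 'I_3 := @Ordinal 3 2 isT.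

Definition rho (R : realFieldType) (Vt Et : finType)
    (inc : Vt -> 'I_3 -> Et) (lam : Et -> R) : R :=
  2 * \sum_(v : Vt)
      (let a := lam (inc v i0) in let b := lam (inc v i1) in
       let c := lam (inc v i2) in
       a / (b * c) + b / (a * c) + c / (a * b)).

(* minimum of lam over the (finite) edge set; 0 if there are no edges *)
Definition lam_min (R : realFieldType) (Et : finType) (lam : Et -> R) : R :=
  match [pick e : Et] with
  | Some e0 => \big[Num.min/lam e0]_(e : Et) lam e
  | None => 0
  end.

(* At a vertex with edge lengths a, b, c the summand of rho is
   (a^2 + b^2 + c^2) / (a b c).  If a is the shortest of the three, the
   triangle inequalities give |b - c| <= a <= min(b, c), hence a^2 <= b c and
   (b - c)^2 < b c, so a^2 + b^2 + c^2 < 4 b c and the summand is below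
   4 / a <= 4 / mu.  Summing over the V vertices and doubling gives 8 V / mu. *)

From HB Require Import structures.
From mathcomp Require Import all_boot all_order all_algebra.
From mathcomp Require Import ring lra.
Set Implicit Arguments.
Unset Strict Implicit.
Unset Printing Implicit Defensive.

Import Order.TTheory GRing.Theory Num.Theory.
Local Open Scope ring_scope.

Section TriangleInequality.
Variable R : realFieldType.
Implicit Types a b c m : R.

Lemma triangle_sqr_sum_lt a b c :
  0 < a -> a <= b -> a <= c -> b <= a + c -> c <= a + b ->
  a ^+ 2 + b ^+ 2 + c ^+ 2 < 4 * (b * c).
Proof.
move=> a_gt0 ab ac bac cab.
have sqr_a_le : a ^+ 2 <= b * c by nra.
have sqr_diff_lt : (b - c) ^+ 2 < b * c by nra.
nra.
Qed.

Lemma triangle_min_sqr_sum_lt a b c m :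
  0 < m -> m <= a -> m <= b -> m <= c ->
  a <= b + c -> b <= a + c -> c <= a + b ->
  m * (a ^+ 2 + b ^+ 2 + c ^+ 2) < 4 * (a * b * c).
Proof.
move=> m_gt0 ma mb mc abc bac cab.
have [[ab ac]|[[ba bc]|[ca cb]]] :
    [/\ a <= b & a <= c] \/ [/\ b <= a & b <= c] \/ [/\ c <= a & c <= b].
  by case: (leP a b) (leP a c) (leP b c) => ? [] ? [] ?; lra.
- have := triangle_sqr_sum_lt (lt_le_trans m_gt0 ma) ab ac bac cab; nra.
- have := triangle_sqr_sum_lt (lt_le_trans m_gt0 mb) ba bc abc ltac:(lra); nra.
- have := triangle_sqr_sum_lt (lt_le_trans m_gt0 mc) ca cb ltac:(lra) ltac:(lra).
  nra.
Qed.

Lemma triangle_vertex_term_lt a b c m :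
  0 < m -> m <= a -> m <= b -> m <= c ->
  a <= b + c -> b <= a + c -> c <= a + b ->
  a / (b * c) + b / (a * c) + c / (a * b) < 4 / m.
Proof.
move=> m_gt0 ma mb mc abc bac cab.
have [a_gt0 b_gt0 c_gt0] : [/\ 0 < a, 0 < b & 0 < c] by split; lra.
have -> : a / (b * c) + b / (a * c) + c / (a * b)
          = (a ^+ 2 + b ^+ 2 + c ^+ 2) / (a * b * c).
  by field; rewrite ?mulf_neq0 ?gt_eqF.
rewrite ltr_pdivrMr ?mulr_gt0 // mulrAC ltr_pdivlMr //.
by rewrite mulrC triangle_min_sqr_sum_lt.
Qed.

End TriangleInequality.

Section LamMin.
Variables (R : realFieldType) (Et : finType) (lam : Et -> R).

Lemma lam_min_le e : lam_min lam <= lam e.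
Proof.
by rewrite /lam_min; case: pickP => [e0 _|/(_ e)//]; apply: bigmin_le.
Qed.

Lemma lam_min_gt0 (e0 : Et) : (forall e, 0 < lam e) -> 0 < lam_min lam.
Proof.
move=> lam_gt0; rewrite /lam_min; case: pickP => [e1 _|/(_ e0)//].
by apply: (big_ind (fun x => 0 < x)) => // x y x_gt0 y_gt0; rewrite lt_min x_gt0.
Qed.

End LamMin.

(* The bound is vertex by vertex. *)
Theorem mainTheorem5 (R : realFieldType) (Vt Et : finType)
    (inc : Vt -> 'I_3 -> Et) (lam : Et -> R) :
  trivalent inc ->
  (0 < #|Vt|)%N ->
  (forall e, 0 < lam e) ->
  (forall v,
     [/\ lam (inc v i0) <= lam (inc v i1) + lam (inc v i2),
         lam (inc v i1) <= lam (inc v i0) + lam (inc v i2) &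
         lam (inc v i2) <= lam (inc v i0) + lam (inc v i1)]) ->
  rho inc lam < 8 * (#|Vt|)%:R / lam_min lam.
Proof.
move=> _ /card_gt0P[v0 _] lam_gt0 triangle.
have mu_gt0 := lam_min_gt0 (inc v0 i0) lam_gt0.
have -> : 8 * (#|Vt|)%:R / lam_min lam = 2 * \sum_(v : Vt) 4 / lam_min lam.
  by rewrite sumr_const -mulr_natr; field; rewrite gt_eqF.
rewrite /rho ltr_pM2l //; apply: ltr_sum => [|v _ /=].
  by apply/hasP; exists v0; rewrite ?mem_index_enum.
have [abc bac cab] := triangle v.
by apply: triangle_vertex_term_lt; rewrite ?lam_min_le.
Qed.
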